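(* Given any instance of the 1-D Crazy Frog Puzzle, one can construct in polynomial time an instance of the 1-D Crazy Frog Puzzle in which the frog is placed on the leftmost cell of the board, such that the new instance has a solution if and only if the original one does.
   Context: 1-D Crazy Frog Puzzle: a board consisting of a single row of cells indexed $0,1,\dots,w-1$, each cell empty or blocked, a starting cell on which a frog is placed (counting as visited), and a sequence of $m$ positive integer jump lengths $J_1,\dots,J_m$, where $m$ is the number of empty cells. Question: is there a choice of signs $s_i\in\{-1,+1\}$ such that the positions $p_i=p_{i-1}+s_iJ_i$ ($p_0$ the start) always lie in $\{0,\dots,w-1\}$, are never blocked cells and are never previously visited, so that every empty cell is visited exactly once? *)

From mathcomp Require Import all_boot.
Set Implicit Arguments. Unset Strict Implicit. Unset Printing Implicit Defensive.

(* board: cell i is empty iff nth false board i = true; w = size board. *)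
Record frog_instance := FrogInstance {
  fi_board : seq bool;
  fi_start : nat;
  fi_jumps : seq nat
}.

Definition valid_instance (I : frog_instance) : bool :=
  [&& fi_start I < size (fi_board I),
      nth false (fi_board I) (fi_start I),
      all (fun J => 0 < J) (fi_jumps I)
    & (size (fi_jumps I)).+1 == count id (fi_board I)].

Definition solvable (I : frog_instance) : Prop :=
  let w := size (fi_board I) in
  let js := fi_jumps I in
  exists ps : seq nat,
    [/\ size ps = size js,
        (forall i, i < size js ->
           let p := nth 0 (fi_start I :: ps) i in
           let q := nth 0 ps i in
           q = p + nth 0 js i \/ p = q + nth 0 js i),
        all (fun q => (q < w) && nth false (fi_board I) q) ps,
        uniq (fi_start I :: ps)
      & (forall x, x < w -> nth false (fi_board I) x -> x \in fi_start I :: ps)].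

(* (symbol 0 is the blank of the Turing machine)                     *)

(* little-endian binary, bit 0 -> symbol 1, bit 1 -> symbol 2;
   0 is encoded by the empty string *)
Fixpoint bin_aux (fuel n : nat) : seq nat :=
  match fuel with
  | 0 => [::]
  | fuel'.+1 => if n == 0 then [::]
                else (if odd n then 2 else 1) :: bin_aux fuel' n./2
  end.
Definition bin (n : nat) : seq nat := bin_aux n n.

Definition encode (I : frog_instance) : seq nat :=
  [seq (if b then 1 else 2) | b <- fi_board I] ++ 3 :: bin (fi_start I)
  ++ flatten [seq 3 :: bin J | J <- fi_jumps I].

Inductive tm_move := MoveL | MoveR | Stay.

Record TM := MkTM {
  tm_nstates : nat;             (* states are 0 .. tm_nstates - 1 *)
  tm_nsym : nat;                (* tape symbols are 0 .. tm_nsym - 1, 0 = blank *)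
  tm_init : nat;
  tm_delta : nat -> nat -> option (nat * nat * tm_move)  (* None = halt *)
}.

Definition tm_wf (M : TM) : Prop :=
  [/\ tm_init M < tm_nstates M,
      4 <= tm_nsym M &
      forall q a, q < tm_nstates M -> a < tm_nsym M ->
        match tm_delta M q a with
        | Some (q', a', _) => (q' < tm_nstates M) && (a' < tm_nsym M)
        | None => true
        end].

(* configuration: state, reversed left part, head symbol, right part *)
Definition config := (nat * seq nat * nat * seq nat)%type.

Definition init_config (M : TM) (input : seq nat) : config :=
  match input with
  | [::] => (tm_init M, [::], 0, [::])
  | a :: r => (tm_init M, [::], a, r)
  end.

Definition halted (M : TM) (c : config) : bool :=
  let: (q, _, a, _) := c in
  if tm_delta M q a is None then true else false.

Definition tm_step (M : TM) (c : config) : config :=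
  let: (q, l, a, r) := c in
  match tm_delta M q a with
  | None => c
  | Some (q', a', mv) =>
    match mv with
    | Stay => (q', l, a', r)
    | MoveL => match l with
               | [::] => (q', [::], 0, a' :: r)
               | x :: l' => (q', l', x, a' :: r)
               end
    | MoveR => match r with
               | [::] => (q', a' :: l, 0, [::])
               | x :: r' => (q', a' :: l, x, r')
               end
    end
  end.

Definition tm_output (c : config) : seq nat :=
  let: (_, _, a, r) := c in
  let s := a :: r in take (find (pred1 0) s) s.

Definition computes_within (M : TM) (x : seq nat) (T : nat) (y : seq nat) : Prop :=
  exists t, t <= T /\
    let c := iter t (tm_step M) (init_config M x) in
    halted M c /\ tm_output c = y.

From mathcomp Require Import all_boot zify.
Set Implicit Arguments. Unset Strict Implicit. Unset Printing Implicit Defensive.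

(* Put a new empty cell in front of the board, start the frog there and
   prepend the jump s + 1, where s is the old start.  From cell 0 this jump
   can only go right, onto the old start shifted by one, and from then on the
   solutions of the two instances correspond under the shift.  On encodings the
   change is local: a 1 is prefixed to the board, the empty code of the new
   start 0 is inserted after the first separator, and the binary code of the old
   start is incremented.  One left-to-right pass does this, writing its output
   with a delay of at most three letters kept in the finite control; walking
   back to the left end keeps the running time linear. *)

Definition leftmost_instance (I : frog_instance) : frog_instance :=
  FrogInstance (true :: fi_board I) 0 ((fi_start I).+1 :: fi_jumps I).

Lemma leftmost_instance_valid I :
  valid_instance I -> valid_instance (leftmost_instance I).
Proof.
case: I => B s Js; rewrite /valid_instance /= => /and4P[_ _ -> /eqP <-].
by rewrite add1n eqxx.
Qed.

Lemma solvable_leftmost I :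
  valid_instance I -> solvable I -> solvable (leftmost_instance I).
Proof.
case: I => B s Js; rewrite /valid_instance /solvable /=.
move=> /and4P[Hs HsB _ _] [ps [Hsize Hjump Hboard Huniq Hcover]].
exists (map succn (s :: ps)); split.
- by rewrite /= size_map Hsize.
- case=> [|i] /= Hi; first by left.
  have := Hjump i Hi; rewrite -/(map succn (s :: ps)) !(nth_map 0) /=; lia.
- by rewrite /= ltnS Hs HsB all_map; apply: sub_all Hboard => q.
- apply/andP; split; first by apply/negP => /mapP[].
  by rewrite /= (mem_map succn_inj) (map_inj_uniq succn_inj).
- case=> [|x] Hx HxB; first by rewrite inE.
  by rewrite inE (mem_map succn_inj) Hcover.
Qed.

Lemma leftmost_solvable I : solvable (leftmost_instance I) -> solvable I.
Proof.
case: I => B s Js; rewrite /solvable /=.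
case=> -[|q ps'] [//= [Hsize] Hjump Hboard Huniq Hcover].
have Hq : q = s.+1 by have := Hjump 0 (ltn0Sn _); rewrite /=; lia.
subst q; move: Huniq Hboard => /= /andP[Hfresh /andP[Hs_ps' Huniq]] /andP[_ Hboard].
have Eps' : ps' = map succn (map predn ps').
  by rewrite -map_comp map_id_in // => -[|q] // Hq0; rewrite !inE Hq0 orbT in Hfresh.
move: (map predn ps') Eps' => ps Eps'; subst ps'.
rewrite size_map in Hsize; rewrite all_map in Hboard.
rewrite (mem_map succn_inj) in Hs_ps'; rewrite (map_inj_uniq succn_inj) in Huniq.
exists ps; split => //=.
- move=> i Hi; have := Hjump i.+1 Hi.
  by rewrite /= -/(map succn (s :: ps)) !(nth_map 0) /=; lia.
- by rewrite Hs_ps'.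
- move=> x Hx HxB; have := Hcover x.+1 Hx HxB.
  by rewrite inE /= -/(map succn (s :: ps)) (mem_map succn_inj).
Qed.

Lemma leftmost_instance_solvable I :
  valid_instance I -> (solvable (leftmost_instance I) <-> solvable I).
Proof. by move=> HI; split; [exact: leftmost_solvable | exact: solvable_leftmost]. Qed.

Definition letter (a : nat) : bool := 0 < a < 4.

Inductive mode := Board | Carry | Rest.

(* [Board] copies the board and doubles its closing separator, enclosing the
   empty code of the new start 0; [Carry] adds one to the little-endian code of
   the old start (letter 2 is bit 1, letter 1 is bit 0); [Rest] copies. *)
Definition emit (m : mode) (a : nat) : mode * seq nat :=
  match m with
  | Board => if a == 3 then (Carry, [:: 3; 3]) else (Board, [:: a])
  | Carry => if a == 2 then (Carry, [:: 1])
             else if a == 1 then (Rest, [:: 2]) else (Rest, [:: 2; 3])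
  | Rest => (Rest, [:: a])
  end.

Definition final_carry (m : mode) : seq nat := if m is Carry then [:: 2] else [::].

Fixpoint transduce (m : mode) (u : seq nat) : seq nat :=
  if u is a :: u' then let: (m', e) := emit m a in e ++ transduce m' u'
  else final_carry m.

Definition growth (m : mode) : nat :=
  match m with Board => 2 | Carry => 1 | Rest => 0 end.

Lemma emit_spec m a : letter a ->
  [/\ all letter (emit m a).2, (emit m a).2 != [::]
    & size (emit m a).2 + growth (emit m a).1 <= growth m + 1].
Proof. by case: a => [|[|[|[|a]]]] //; case: m. Qed.

Lemma transduce_letters m u : all letter u -> all letter (transduce m u).
Proof.
elim: u m => [|a u IH] m /=; first by case: m.
case/andP=> Ha Hu; have [He _ _] := emit_spec m Ha.
by case: emit He => m' e /= He; rewrite all_cat He IH.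
Qed.

Lemma size_transduce m u : all letter u -> size (transduce m u) <= size u + growth m.
Proof.
elim: u m => [|a u IH] m /=; first by case: m.
case/andP=> Ha Hu; have [_ _ He] := emit_spec m Ha.
by case: emit He => m' e /= He; rewrite size_cat; have := IH m' Hu; lia.
Qed.

Lemma bin_aux_fuel f g n : n <= f -> n <= g -> bin_aux f n = bin_aux g n.
Proof.
elim: f g n => [|f IH] [|g] n /=; try by case: n.
by case: eqP => // /eqP Hn Hf Hg; congr (_ :: _); apply: IH; lia.
Qed.

Lemma binE n : bin n = if n == 0 then [::] else (if odd n then 2 else 1) :: bin n./2.
Proof. by case: n => [|n] //=; congr (_ :: _); apply: bin_aux_fuel; lia. Qed.

Lemma bin_letters n : all letter (bin n).
Proof.
elim/ltn_ind: n => n IH; rewrite binE; case: eqP => //= /eqP Hn.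
by rewrite IH; [case: odd | lia].
Qed.

Lemma transduce_Rest u : transduce Rest u = u.
Proof. by elim: u => //= a u ->. Qed.

Lemma transduce_Carry_bin n u : head 3 u = 3 ->
  transduce Carry (bin n ++ u) = bin n.+1 ++ u.
Proof.
move=> Hu; elim/ltn_ind: n => n IH; rewrite (binE n.+1) /= uphalf_half.
rewrite binE; case: eqP => [-> | /eqP Hn] /=.
  by case: (u) Hu => [|a u'] //= ->; rewrite /= transduce_Rest.
case: odd (odd_double_half n) => /= Hhalf; last by rewrite transduce_Rest.
by rewrite IH //; lia.
Qed.

Definition board_letter (b : bool) : nat := if b then 1 else 2.

Lemma transduce_Board_board B u :
  transduce Board (map board_letter B ++ u) = map board_letter B ++ transduce Board u.
Proof. by elim: B => //= b B IH; case: b; rewrite /= IH. Qed.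

Lemma encode_letters I : all letter (encode I).
Proof.
case: I => B s Js; rewrite /encode -/(map board_letter B) all_cat /= all_cat bin_letters.
rewrite all_map; apply/andP; split; first by apply/allP => -[].
by elim: Js => //= J Js IH; rewrite all_cat /= bin_letters.
Qed.

Lemma transduce_encode I :
  1 :: transduce Board (encode I) = encode (leftmost_instance I).
Proof.
case: I => B s Js; rewrite /encode /= -!/(map board_letter _).
rewrite transduce_Board_board /= transduce_Carry_bin //.
by case: Js.
Qed.

Inductive state := Scan of mode & seq nat | Flush of seq nat | Rewind | Halt.

Fixpoint code_digits (b : seq nat) : nat :=
  if b is c :: b' then c + 4 * code_digits b' else 0.

Fixpoint decode_digits (fuel n : nat) : seq nat :=
  if fuel is fuel'.+1 then
    if n == 0 then [::] else n %% 4 :: decode_digits fuel' (n %/ 4)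
  else [::].

Definition mode_index (m : mode) : nat :=
  match m with Board => 0 | Carry => 1 | Rest => 2 end.

(* Buffers are read as base-4 numerals with nonzero digits, so they can be
   decoded. *)
Definition state_code (s : state) : nat :=
  match s with
  | Scan m b => 8 * code_digits b + mode_index m
  | Flush b => 8 * code_digits b + 3
  | Rewind => 4
  | Halt => 5
  end.

Definition state_of_code (n : nat) : state :=
  let b := decode_digits n (n %/ 8) in
  match n %% 8 with
  | 0 => Scan Board b | 1 => Scan Carry b | 2 => Scan Rest b
  | 3 => Flush b | 4 => Rewind | _ => Halt
  end.

Definition short_word (b : seq nat) : bool := all letter b && (size b <= 3).

Definition codable (s : state) : bool :=
  if s is (Scan _ b | Flush b) then short_word b else true.

Lemma code_digitsK b fuel :
  all letter b -> size b <= fuel -> decode_digits fuel (code_digits b) = b.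
Proof.
elim: b fuel => [|c b IH] [|fuel] //= /andP[/andP[Hc0 Hc4] Hb] Hsize.
have -> : (c + 4 * code_digits b == 0) = false by apply/eqP; lia.
have -> : (c + 4 * code_digits b) %% 4 = c by lia.
have -> : (c + 4 * code_digits b) %/ 4 = code_digits b by lia.
by rewrite IH.
Qed.

Lemma size_code_digits b : all letter b -> size b <= code_digits b.
Proof. by elim: b => //= c b IH /andP[/andP[Hc _] /IH]; lia. Qed.

Lemma code_digits_lt b : all letter b -> code_digits b < 4 ^ size b.
Proof. by elim: b => //= c b IH /andP[/andP[_ Hc] /IH]; rewrite expnS; lia. Qed.

Lemma state_of_codeK s : codable s -> state_of_code (state_code s) = s.
Proof.
have digits_of_code k b : k < 8 -> all letter b ->
    decode_digits (8 * code_digits b + k) ((8 * code_digits b + k) %/ 8) = b.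
  move=> Hk Hb; have := size_code_digits Hb.
  have -> : (8 * code_digits b + k) %/ 8 = code_digits b by lia.
  by move=> Hsize; apply: code_digitsK => //; lia.
have tag_of_code k c : k < 8 -> (8 * c + k) %% 8 = k by lia.
rewrite /state_of_code; case: s => [m b|b||] //= /andP[Hb _].
  by case: m; rewrite /= tag_of_code // digits_of_code.
by rewrite tag_of_code // digits_of_code.
Qed.

Lemma state_code_lt s : codable s -> state_code s < 512.
Proof.
have short_lt b : short_word b -> 8 * code_digits b + 3 < 512.
  move=> /andP[Hb Hsize]; have : 4 ^ size b <= 4 ^ 3 by rewrite leq_exp2l.
  by have := code_digits_lt Hb; lia.
case: s => [m b|b||] //= /short_lt; last by [].
by case: m => /=; lia.
Qed.

Definition transition (s : state) (a : nat) : option (state * nat * tm_move) :=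
  match s with
  | Scan m b =>
      if a == 0 then Some (Flush (b ++ final_carry m), 0, Stay)
      else if b is c :: b' then
        let: (m', e) := emit m a in Some (Scan m' (b' ++ e), c, MoveR)
      else None
  | Flush b => if b is c :: b' then Some (Flush b', c, MoveR) else Some (Rewind, 0, MoveL)
  | Rewind => if a == 0 then Some (Halt, 0, MoveR) else Some (Rewind, a, MoveL)
  | Halt => None
  end.

(* The guard only makes the machine finite ([tm_wf]); it never fires on the
   codes of codable states, which are all that occur in a run. *)
Definition shift_delta (q a : nat) : option (nat * nat * tm_move) :=
  if transition (state_of_code q) a is Some (s', a', mv) then
    if (state_code s' < 512) && (a' < 4) then Some (state_code s', a', mv) else None
  else None.

Definition shift_machine : TM :=
  MkTM 512 4 (state_code (Scan Board [:: 1])) shift_delta.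

Lemma shift_machine_wf : tm_wf shift_machine.
Proof.
split => // q a _ _ /=; rewrite /shift_delta.
by case: transition => [[[s' a'] mv]|] //; case: ifP.
Qed.

Lemma shift_deltaE s a s' a' mv :
  codable s -> codable s' -> a' < 4 -> transition s a = Some (s', a', mv) ->
  tm_delta shift_machine (state_code s) a = Some (state_code s', a', mv).
Proof.
move=> Hs Hs' Ha' Htrans.
by rewrite /= /shift_delta state_of_codeK // Htrans state_code_lt // Ha'.
Qed.

Definition config_at (q : nat) (l u : seq nat) : config := (q, l, head 0 u, behead u).

Lemma tm_step_right M q l a u q' a' :
  tm_delta M q a = Some (q', a', MoveR) -> tm_step M (q, l, a, u) = config_at q' (a' :: l) u.
Proof. by rewrite /tm_step => ->; case: u. Qed.

Lemma tm_step_left M q x l a r q' a' :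
  tm_delta M q a = Some (q', a', MoveL) -> tm_step M (q, x :: l, a, r) = (q', l, x, a' :: r).
Proof. by rewrite /tm_step => ->. Qed.

Lemma tm_step_left_end M q a r q' a' :
  tm_delta M q a = Some (q', a', MoveL) -> tm_step M (q, [::], a, r) = (q', [::], 0, a' :: r).
Proof. by rewrite /tm_step => ->. Qed.

Lemma tm_step_stay M q l a r q' a' :
  tm_delta M q a = Some (q', a', Stay) -> tm_step M (q, l, a, r) = (q', l, a', r).
Proof. by rewrite /tm_step => ->. Qed.

(* While scanning, the cells left of the head hold the output minus the
   buffer [b] of letters still to be written; in mode [m] the buffer can grow
   by at most [growth m] more, so it never exceeds three letters. *)
Definition scan_buffer (m : mode) (b : seq nat) : bool :=
  [&& all letter b, b != [::] & size b + growth m <= 3].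

Lemma scan_step m c b a l u m' e :
  letter a -> scan_buffer m (c :: b) -> emit m a = (m', e) ->
  tm_step shift_machine (config_at (state_code (Scan m (c :: b))) l (a :: u))
    = config_at (state_code (Scan m' (b ++ e))) (c :: l) u /\ scan_buffer m' (b ++ e).
Proof.
move=> Ha; rewrite /scan_buffer [all _ (_ :: _)]/= => /and3P[/andP[Hc Hb] _ Hsize] Hemit.
have [He He_nil He_size] :
    [/\ all letter e, e != [::] & size e + growth m' <= growth m + 1].
  by have := emit_spec m Ha; rewrite Hemit.
have Hbuf : scan_buffer m' (b ++ e).
  move: He_nil Hsize; rewrite /scan_buffer all_cat Hb He -!size_eq0 size_cat /=; lia.
split=> //; apply: tm_step_right; apply: shift_deltaE => //.
- by rewrite /= /short_word [all _ (_ :: _)]/= Hc Hb; move: Hsize => /=; lia.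
- by move: Hbuf => /and3P[Hbe _ Hbe_size]; rewrite /codable /short_word Hbe /=; lia.
- by case/andP: Hc.
- by rewrite /= Hemit ifF //; move: Ha; case: (a).
Qed.

Lemma scan_phase u m b l : all letter u -> scan_buffer m b ->
  exists w m' b',
    [/\ iter (size u) (tm_step shift_machine) (config_at (state_code (Scan m b)) l u)
          = config_at (state_code (Scan m' b')) (rev w ++ l) [::],
        w ++ b' ++ final_carry m' = b ++ transduce m u,
        size w = size u
      & scan_buffer m' b'].
Proof.
elim: u m b l => [|a u IH] m b l; first by exists [::], m, b.
case: b => [|c b] /andP[Ha Hu] Hbuf; first by case/and3P: Hbuf.
case Hemit: (emit m a) => [m1 e].
have [Hstep Hbuf1] := scan_step l u Ha Hbuf Hemit.
have [w [m' [b' [Hrun Hout Hsize Hbuf']]]] := IH m1 (b ++ e) (c :: l) Hu Hbuf1.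
exists (c :: w), m', b'; split => //.
- by rewrite -[size _]/(size u).+1 iterSr Hstep Hrun rev_cons cat_rcons.
- by rewrite /= Hout Hemit catA.
- by rewrite /= Hsize.
Qed.

Lemma flush_phase b l : short_word b ->
  iter (size b) (tm_step shift_machine) (state_code (Flush b), l, 0, [::])
    = (state_code (Flush [::]), rev b ++ l, 0, [::]).
Proof.
elim: b l => [|c b IH] l //; rewrite /short_word [all _ (_ :: _)]/=.
move=> /andP[/andP[Hc Hb] Hsize].
have Hshort : short_word b by rewrite /short_word Hb; move: Hsize => /=; lia.
have Hwrite : tm_delta shift_machine (state_code (Flush (c :: b))) 0
    = Some (state_code (Flush b), c, MoveR).
  apply: shift_deltaE => //; last by case/andP: Hc.
  by rewrite /= /short_word [all _ (_ :: _)]/= Hc Hb.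
rewrite -[size _]/(size b).+1 iterSr (tm_step_right _ _ Hwrite).
by rewrite IH // rev_cons cat_rcons.
Qed.

Lemma rewind_phase l a r : all letter (a :: l) ->
  iter (size l).+2 (tm_step shift_machine) (state_code Rewind, l, a, r)
    = config_at (state_code Halt) [:: 0] (rev (a :: l) ++ r).
Proof.
have step_letter a' : letter a' ->
    tm_delta shift_machine (state_code Rewind) a' = Some (state_code Rewind, a', MoveL).
  move=> Ha'; apply: shift_deltaE => //; first by case/andP: Ha'.
  by rewrite /= ifF //; move: Ha'; case: (a').
have step_blank : tm_delta shift_machine (state_code Rewind) 0
    = Some (state_code Halt, 0, MoveR) by apply: shift_deltaE.
elim: l a r => [|x l IH] a r /andP[Ha Hl].
  by rewrite !iterSr (tm_step_left_end _ (step_letter _ Ha)) (tm_step_right _ _ step_blank).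
rewrite -[size _]/(size l).+1 iterSr (tm_step_left _ _ _ (step_letter _ Ha)) IH //.
by rewrite [rev (a :: _)]rev_cons cat_rcons.
Qed.

Lemma return_phase v : all letter v -> v != [::] ->
  iter (size v).+2 (tm_step shift_machine) (state_code (Flush [::]), rev v, 0, [::])
    = config_at (state_code Halt) [:: 0] (rcons v 0).
Proof.
case/lastP: v => [|v z] // Hvz _; rewrite size_rcons rev_rcons iterSr.
have Hturn : tm_delta shift_machine (state_code (Flush [::])) 0
    = Some (state_code Rewind, 0, MoveL) by apply: shift_deltaE.
rewrite (tm_step_left _ _ _ Hturn) -(size_rev v) rewind_phase.
  by rewrite rev_cons revK cats1.
by rewrite /= all_rev -all_rcons.
Qed.

Lemma write_phase x : all letter x ->
  exists2 n, n <= size x + 4 &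
    iter n (tm_step shift_machine) (init_config shift_machine x)
      = (state_code (Flush [::]), rev (1 :: transduce Board x), 0, [::]).
Proof.
move=> Hx; have Hinit : init_config shift_machine x
    = config_at (state_code (Scan Board [:: 1])) [::] x by case: (x).
have [w [m [b [Hscan Hout _ Hbuf]]]] := scan_phase [::] Hx (isT : scan_buffer Board [:: 1]).
move: Hbuf => /and3P[Hb _ Hb_size].
have Hflush : short_word (b ++ final_carry m).
  by rewrite /short_word all_cat Hb size_cat; case: (m) Hb_size => /=; lia.
have Hstay : tm_delta shift_machine (state_code (Scan m b)) 0
    = Some (state_code (Flush (b ++ final_carry m)), 0, Stay).
  by apply: shift_deltaE => //; rewrite /= /short_word Hb; lia.
exists (size (b ++ final_carry m) + (size x).+1).
  by move: Hflush => /andP[_]; lia.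
rewrite iterD iterS Hinit Hscan cats0 (tm_step_stay _ _ Hstay) flush_phase //.
by rewrite -rev_cat; congr (_, rev _, _, _); exact: Hout.
Qed.

Lemma tm_output_config_at q l v : all letter v -> tm_output (config_at q l (rcons v 0)) = v.
Proof.
move=> Hv; have -> : tm_output (config_at q l (rcons v 0))
    = take (find (pred1 0) (rcons v 0)) (rcons v 0) by case: (v).
have Hno_blank : ~~ has (pred1 0) v.
  by apply/hasP => -[y /(allP Hv) Hy /eqP Ey]; rewrite Ey in Hy.
by rewrite -cats1 find_cat (negbTE Hno_blank) /= addn0 take_size_cat.
Qed.

Lemma shift_machine_computes x : all letter x ->
  computes_within shift_machine x (10 * (size x).+1) (1 :: transduce Board x).
Proof.
move=> Hx; have Hv : all letter (1 :: transduce Board x) by rewrite /= transduce_letters.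
have [n Hn Hwrite] := write_phase Hx.
exists ((size (1 :: transduce Board x)).+2 + n); split.
  by have := size_transduce Board Hx; rewrite /=; lia.
rewrite iterD Hwrite return_phase //; split; first by [].
exact: tm_output_config_at.
Qed.

Theorem mainTheorem3 :
  exists (M : TM) (c k : nat), tm_wf M /\
    forall I : frog_instance, valid_instance I ->
      exists I' : frog_instance,
        [/\ valid_instance I',
            fi_start I' = 0,
            (solvable I' <-> solvable I)
          & computes_within M (encode I) (c * (size (encode I)).+1 ^ k)
                            (encode I')].
Proof.
exists shift_machine, 10, 1; split; first exact: shift_machine_wf.
move=> I HI; exists (leftmost_instance I); split.
- exact: leftmost_instance_valid.
- by [].
- exact: leftmost_instance_solvable.
- by rewrite expn1 -transduce_encode; apply/shift_machine_computes/encode_letters.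
Qed.
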